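(* For every ${\bf L}\in\mathbb{S}^d_{++}$, $$\lambda_{\max}\big({\bf L}^{1/2}\,\mathrm{diag}({\bf L}^{-1})\,{\bf L}^{1/2}\big)\cdot\det({\bf L})^{1/d}\ge\det(\mathrm{diag}({\bf L}))^{1/d}.$$
   Context: $\mathrm{diag}({\bf A})$ denotes the diagonal matrix having the same diagonal as ${\bf A}$; $\mathbb{S}^d_{++}$ is the set of symmetric positive definite $d\times d$ matrices; $\lambda_{\max}$ the largest eigenvalue. *)

From HB Require Import structures.
From mathcomp Require Import all_boot all_order all_algebra.
From mathcomp Require Import all_classical all_reals all_analysis.
Set Implicit Arguments. Unset Strict Implicit. Unset Printing Implicit Defensive.
Import Order.TTheory GRing.Theory Num.Theory.
Local Open Scope ring_scope.

Definition mdiag (R : pzRingType) (d : nat) (A : 'M[R]_d) : 'M[R]_d :=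
  diag_mx (\row_i A i i).

Definition spd (R : realType) (d : nat) (A : 'M[R]_d) : Prop :=
  A^T = A /\ forall v : 'rV[R]_d, v != 0 -> 0 < (v *m A *m v^T) 0 0.

Definition spsd (R : realType) (d : nat) (A : 'M[R]_d) : Prop :=
  A^T = A /\ forall v : 'rV[R]_d, 0 <= (v *m A *m v^T) 0 0.

Definition is_sqrtm (R : realType) (d : nat) (A S : 'M[R]_d) : Prop :=
  spsd S /\ S *m S = A.

Definition is_lambda_max (R : realType) (d : nat) (M : 'M[R]_d) (l : R) : Prop :=
  eigenvalue M l /\ forall a : R, eigenvalue M a -> a <= l.

From HB Require Import structures.
From mathcomp Require Import all_boot all_order all_algebra.
From mathcomp Require Import all_classical all_reals all_analysis.
From mathcomp Require Import ring lra.
Import Order.TTheory GRing.Theory Num.Theory.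
Set Implicit Arguments. Unset Strict Implicit. Unset Printing Implicit Defensive.
Local Open Scope ring_scope.

(* Write M := S diag(L^-1) S with S = L^{1/2}.  Evaluating the quadratic form of M at
   e_i S gives (L diag(L^-1) L)_ii <= l L_ii, and the left-hand side is at least
   L_ii^2 (L^-1)_ii, so L_ii (L^-1)_ii <= l for every i.  Multiplying over i and using
   Hadamard's inequality det(L^-1) <= prod_i (L^-1)_ii gives det(diag L) <= l^d det L;
   take d-th roots.
   The bound v M v^T <= l |v|^2 needs no spectral theorem: the supremum t of the
   Rayleigh quotient of M is an eigenvalue, for otherwise t - M would be positive
   semidefinite and invertible, hence bounded below by some c |v|^2 with c > 0, and
   t - c would be a smaller upper bound. *)

Lemma row_delta_neq0 (R : nzRingType) n (i : 'I_n) : 'e_i != 0 :> 'rV[R]_n.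
Proof. by apply/eqP => /rowP/(_ i); rewrite !mxE !eqxx => /eqP; rewrite oner_eq0. Qed.

Lemma det_mdiag (R : comPzRingType) n (A : 'M[R]_n) : \det (mdiag A) = \prod_i A i i.
Proof. by rewrite det_diag; apply: eq_bigr => i _; rewrite mxE. Qed.

Lemma sym_mul_mdiag_diag_ge (R : realDomainType) n (L A : 'M[R]_n) i :
  L^T = L -> (forall j, 0 <= A j j) -> L i i ^+ 2 * A i i <= (L *m mdiag A *m L) i i.
Proof.
move=> LT A_ge0; have Lji j : L j i = L i j by rewrite -[in RHS]LT mxE.
rewrite mul_mx_diag mxE (bigD1 i) //= !mxE [L i i * _ * _]mulrAC -expr2 lerDl.
by apply: sumr_ge0 => j _; rewrite !mxE Lji mulrAC -expr2 mulr_ge0 ?sqr_ge0.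
Qed.

Lemma det_block_schur (R : comUnitRingType) m n (a : 'M[R]_m) (b : 'M[R]_(m, n))
    (c : 'M[R]_(n, m)) (C : 'M[R]_n) :
  C \in unitmx -> \det (block_mx a b c C) = \det (a - b *m invmx C *m c) * \det C.
Proof.
move=> C_unit; set s := a - b *m invmx C *m c.
have -> : block_mx a b c C = block_mx 1%:M (b *m invmx C) 0 1%:M *m block_mx s 0 c C.
  by rewrite mulmx_block !mul1mx !mul0mx !add0r mulmxKV // subrK.
by rewrite det_mulmx det_ublock !det_scalar !expr1n !mul1r det_lblock.
Qed.

Section QuadraticForm.
Variables (R : realFieldType) (n : nat).
Implicit Types (A B : 'M[R]_n) (u v : 'rV[R]_n).

Definition qform A v : R := (v *m A *m v^T) 0 0.
Definition sqnorm v : R := (v *m v^T) 0 0.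
Definition posdef A := A^T = A /\ forall v, v != 0 -> 0 < qform A v.

Lemma qformE A v : qform A v = \sum_i \sum_j v 0 i * A i j * v 0 j.
Proof.
rewrite /qform !mxE; under eq_bigr do rewrite !mxE big_distrl /=.
by rewrite exchange_big.
Qed.

Lemma sqnormE v : sqnorm v = \sum_i v 0 i ^+ 2.
Proof. by rewrite /sqnorm mxE; apply: eq_bigr => i _; rewrite mxE expr2. Qed.

Lemma sqnorm_ge0 v : 0 <= sqnorm v.
Proof. by rewrite sqnormE sumr_ge0 // => i _; rewrite sqr_ge0. Qed.

Lemma sqnorm_eq0 v : (sqnorm v == 0) = (v == 0).
Proof.
apply/eqP/eqP => [|->]; last by rewrite sqnormE big1 // => i _; rewrite mxE expr0n.
rewrite sqnormE => /eqP; rewrite psumr_eq0 => [/allP v0|i _]; last exact: sqr_ge0.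
apply/rowP => i; rewrite mxE; apply/eqP; rewrite -sqrf_eq0.
exact: implyP (v0 i (mem_index_enum i)) isT.
Qed.

Lemma sqnorm_gt0 v : (0 < sqnorm v) = (v != 0).
Proof. by rewrite lt_def sqnorm_ge0 sqnorm_eq0 andbT. Qed.

Lemma sqr_coord_le_sqnorm v i : v 0 i ^+ 2 <= sqnorm v.
Proof. by rewrite sqnormE (bigD1 i) //= lerDl sumr_ge0 // => j _; apply: sqr_ge0. Qed.

Lemma sqnorm0 : sqnorm 0 = 0.
Proof. by apply/eqP; rewrite sqnorm_eq0. Qed.

Lemma sqnorm_mulmx B v : sqnorm (v *m B) = qform (B *m B^T) v.
Proof. by rewrite /sqnorm /qform trmx_mul !mulmxA. Qed.

Lemma qform0 A : qform A 0 = 0.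
Proof. by rewrite /qform !mul0mx mxE. Qed.

Lemma qformB A B v : qform (A - B) v = qform A v - qform B v.
Proof. by rewrite /qform mulmxBr mulmxBl !mxE. Qed.

Lemma qform_scalar a v : qform a%:M v = a * sqnorm v.
Proof. by rewrite /qform mul_mx_scalar -scalemxAl mxE. Qed.

Lemma qform_mulmx A B v : qform A (v *m B) = qform (B *m A *m B^T) v.
Proof. by rewrite /qform trmx_mul !mulmxA. Qed.

Lemma qform_delta A i : qform A 'e_i = A i i.
Proof. by rewrite /qform -rowE trmx_delta -colE !mxE. Qed.

Lemma qform_subZ A u v s : A^T = A ->
  qform A (u - s *: v) = qform A u - 2 * s * (v *m A *m u^T) 0 0 + s ^+ 2 * qform A v.
Proof.
rewrite /qform => AT; have uAv : (u *m A *m v^T) 0 0 = (v *m A *m u^T) 0 0.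
  transitivity ((u *m A *m v^T)^T 0 0); first by rewrite [RHS]mxE.
  by rewrite !trmx_mul trmxK AT mulmxA.
have -> : (u - s *: v)^T = u^T - s *: v^T by rewrite linearB linearZ.
rewrite !(mulmxBl, mulmxBr) -!scalemxAl -!scalemxAr; move: uAv.
set a := u *m A *m u^T; set b := v *m A *m u^T; set b' := u *m A *m v^T.
set c := v *m A *m v^T; rewrite !mxE => ->; ring.
Qed.

Lemma qform_bounded A : exists2 C, 0 < C & forall v, qform A v <= C * sqnorm v.
Proof.
have absA_ge0 : 0 <= \sum_i \sum_j `|A i j| by do 2!apply: sumr_ge0 => ? _.
exists (1 + \sum_i \sum_j `|A i j|); first by rewrite ltr_pwDl.
move=> v; rewrite mulrDl mul1r qformE; apply: ler_wpDl; first exact: sqnorm_ge0.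
rewrite mulr_suml; apply: ler_sum => i _; rewrite mulr_suml; apply: ler_sum => j _.
rewrite mulrAC (le_trans (ler_norm _)) // normrM mulrC ler_wpM2l // normrM.
apply: le_trans (leif_mean_square _ _).1 _; rewrite !real_normK ?num_real //.
have := sqr_coord_le_sqnorm v i; have := sqr_coord_le_sqnorm v j; lra.
Qed.

Lemma psd_unitmx_coercive A : A^T = A -> A \in unitmx -> (forall v, 0 <= qform A v) ->
  exists2 c, 0 < c & forall v, c * sqnorm v <= qform A v.
Proof.
move=> AT A_unit A_psd; set Q := invmx A.
have [C C_gt0 QC] := qform_bounded Q.
exists C^-1; first by rewrite invr_gt0.
move=> v; have := A_psd (v - C^-1 *: (v *m Q)).
have vQA : v *m Q *m A = v by rewrite -mulmxA mulVmx ?mulmx1.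
have QAQ : Q *m A *m Q^T = Q by rewrite trmx_inv AT mulVmx ?mul1mx.
rewrite qform_subZ // vQA -/(sqnorm v) qform_mulmx QAQ.
have : C^-1 ^+ 2 * qform Q v <= C^-1 * sqnorm v.
  rewrite expr2 -mulrA; apply: ler_wpM2l; first by rewrite invr_ge0 ltW.
  by rewrite ler_pdivrMl.
lra.
Qed.

Lemma posdef_diag_gt0 A i : posdef A -> 0 < A i i.
Proof.
by case=> _ A_pd; rewrite -qform_delta A_pd ?row_delta_neq0.
Qed.

End QuadraticForm.

Section Hadamard.
Variable R : realFieldType.

Lemma posdef_drsubmx m n (A : 'M[R]_(m + n)) : posdef A -> posdef (drsubmx A).
Proof.
case=> AT A_pd; split=> [|v v0]; first by rewrite trmx_drsub AT.
have := A_pd (row_mx 0 v); rewrite row_mx_eq0 eqxx v0 => /(_ isT).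
rewrite /qform -{1}(submxK A) tr_row_mx mul_row_block mul_row_col trmx0 !mul0mx.
by rewrite !add0r mulmx0 add0r.
Qed.

Lemma det_posdef_gt0_le_prod_diag n (A : 'M[R]_n) :
  posdef A -> 0 < \det A /\ \det A <= \prod_i A i i.
Proof.
elim: n A => [|n IH] A; first by rewrite det_mx00 big_ord0 ltr01 lexx.
rewrite -[n.+1]/(1 + n)%N in A * => A_pd; have C_pd := posdef_drsubmx A_pd.
pose a := ulsubmx A; pose b := ursubmx A; pose C := drsubmx A.
have A_block : A = block_mx a b b^T C.
  by rewrite /a /b /C trmx_ursub A_pd.1 submxK.
have [detC_gt0 detC_le] := IH C C_pd.
have C_unit : C \in unitmx by rewrite unitmxE unitfE gt_eqF.
pose s := a - b *m invmx C *m b^T.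
have detA : \det A = s 0 0 * \det C by rewrite A_block det_block_schur // det_mx11.
have s_gt0 : 0 < s 0 0.
  have := A_pd.2 (row_mx 1%:M (- (b *m invmx C))); rewrite row_mx_eq0 oner_eq0 /=.
  rewrite /qform A_block mul_row_block !mul1mx !mulNmx mulmxKV // subrr => /(_ isT).
  by rewrite tr_row_mx mul_row_col mul0mx addr0 trmx1 mulmx1.
have s_le : s 0 0 <= a 0 0.
  have : 0 <= qform C (b *m invmx C).
    have [->|bC0] := eqVneq (b *m invmx C) 0; first by rewrite qform0.
    exact/ltW/C_pd.2.
  rewrite qform_mulmx trmx_inv C_pd.1 mulVmx // mul1mx /qform /s !mxE; lra.
split; first by rewrite detA mulr_gt0.
rewrite detA big_ord_recl.
have -> : A ord0 ord0 = a 0 0 by rewrite /a !mxE; congr (A _ _); apply: val_inj.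
rewrite (eq_bigr (fun i : 'I_n => C i i)); last first.
  by move=> i _; rewrite /C !mxE; congr (A _ _); apply: val_inj.
by apply: ler_pM => //; apply: ltW.
Qed.

Lemma posdef_unitmx n (A : 'M[R]_n) : posdef A -> A \in unitmx.
Proof. by case/det_posdef_gt0_le_prod_diag => detA_gt0 _; rewrite unitmxE unitfE gt_eqF. Qed.

Lemma posdef_invmx n (A : 'M[R]_n) : posdef A -> posdef (invmx A).
Proof.
move=> A_pd; have A_unit := posdef_unitmx A_pd; case: A_pd => AT A_pd.
split=> [|v v0]; first by rewrite trmx_inv AT.
have vA0 : v *m invmx A != 0.
  by apply: contraNneq v0 => vA0; rewrite -(mulmxKV A_unit v) vA0 mul0mx.
by have := A_pd _ vA0; rewrite qform_mulmx trmx_inv AT mulVmx ?mul1mx.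
Qed.

Lemma posdef_diag_mul_invmx_gt0 n (A : 'M[R]_n) i : posdef A -> 0 < A i i * invmx A i i.
Proof. by move=> A_pd; rewrite mulr_gt0 ?posdef_diag_gt0 //; apply: posdef_invmx. Qed.

End Hadamard.

Section RayleighQuotient.
Variables (R : realType) (n : nat) (M : 'M[R]_n).
Hypothesis MT : M^T = M.

Let rayleigh := [set qform M v / sqnorm v | v in [set v : 'rV_n | v != 0]]%classic.

Definition rayleigh_sup := sup rayleigh.

Lemma qform_le_rayleigh_sup v : qform M v <= rayleigh_sup * sqnorm v.
Proof.
have [->|v0] := eqVneq v 0; first by rewrite qform0 sqnorm0 mulr0.
rewrite -ler_pdivrMr ?sqnorm_gt0 //; apply: sup_upper_bound; last by exists v.
split; first by exists (qform M v / sqnorm v), v.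
have [C _ MC] := qform_bounded M.
by exists C => _ [w w0 <-]; rewrite ler_pdivrMr ?sqnorm_gt0.
Qed.

Lemma rayleigh_sup_eigenvalue : (0 < n)%N -> eigenvalue M rayleigh_sup.
Proof.
move=> n_gt0; set t := rayleigh_sup; apply: contraT => not_eig.
have P_unit : t%:M - M \in unitmx.
  rewrite -opprB -scaleN1r unitmxZ ?unitrN1 // -row_free_unit -kermx_eq0.
  by rewrite negbK in not_eig.
have PT : (t%:M - M)^T = t%:M - M by rewrite linearB /= tr_scalar_mx MT.
have P_psd w : 0 <= qform (t%:M - M) w.
  by rewrite qformB qform_scalar subr_ge0 qform_le_rayleigh_sup.
have [c c_gt0 Pc] := psd_unitmx_coercive PT P_unit P_psd.
suff : t <= t - c by lra.
apply: ge_sup => [|_ [w w0 <-]].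
  pose e : 'rV[R]_n := 'e_(Ordinal n_gt0).
  by exists (qform M e / sqnorm e), e => //=; apply: row_delta_neq0.
rewrite ler_pdivrMr ?sqnorm_gt0 // mulrBl.
by have := Pc w; rewrite qformB qform_scalar; lra.
Qed.

Lemma qform_le_eigenvalue_ub l : (forall a, eigenvalue M a -> a <= l) ->
  forall v, qform M v <= l * sqnorm v.
Proof.
move=> l_ub v; have [->|v0] := eqVneq v 0; first by rewrite qform0 sqnorm0 mulr0.
have n_gt0 : (0 < n)%N by case/matrix0Pn: v0 => _ [j _]; apply: leq_ltn_trans (ltn_ord j).
apply: le_trans (qform_le_rayleigh_sup v) _.
by rewrite ler_wpM2r ?sqnorm_ge0 ?l_ub ?rayleigh_sup_eigenvalue.
Qed.

End RayleighQuotient.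

Lemma diag_mul_invmx_diag_le (R : realType) n (L S : 'M[R]_n) l :
    posdef L -> S^T = S -> S *m S = L ->
    (forall a, eigenvalue (S *m mdiag (invmx L) *m S) a -> a <= l) ->
  forall i, L i i * invmx L i i <= l.
Proof.
move=> L_pd ST SS l_ub i.
have MT : (S *m mdiag (invmx L) *m S)^T = S *m mdiag (invmx L) *m S.
  by rewrite !trmx_mul ST tr_diag_mx mulmxA.
have := qform_le_eigenvalue_ub MT l_ub ('e_i *m S).
rewrite qform_mulmx sqnorm_mulmx ST SS qform_delta.
have -> : S *m (S *m mdiag (invmx L) *m S) *m S = L *m mdiag (invmx L) *m L.
  by rewrite !mulmxA SS -(mulmxA _ S S) SS.
rewrite qform_delta => LDL_le.
rewrite -(ler_pM2l (posdef_diag_gt0 i L_pd)) mulrA -expr2 (mulrC _ l).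
apply: le_trans (sym_mul_mdiag_diag_ge i L_pd.1 _) LDL_le => j.
by rewrite ltW // posdef_diag_gt0 //; apply: posdef_invmx.
Qed.

Lemma det_mdiag_le_exprn_det (R : realFieldType) n (L : 'M[R]_n) l :
  posdef L -> (forall i, L i i * invmx L i i <= l) -> \det (mdiag L) <= l ^+ n * \det L.
Proof.
move=> L_pd diag_le; have [detL_gt0 _] := det_posdef_gt0_le_prod_diag L_pd.
have [_] := det_posdef_gt0_le_prod_diag (posdef_invmx L_pd).
rewrite det_inv => detLi_le.
have : \prod_i (L i i * invmx L i i) <= l ^+ n.
  rewrite -[n in l ^+ n]card_ord -prodr_const; apply: ler_prod => i _.
  by rewrite diag_le andbT ltW // posdef_diag_mul_invmx_gt0.
rewrite big_split /= det_mdiag -ler_pdivrMr //; apply: le_trans.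
by rewrite ler_pM2l // prodr_gt0 // => i _; apply: posdef_diag_gt0.
Qed.

Theorem proposition2 (R : realType) (d : nat) (hd : (0 < d)%N)
    (L : 'M[R]_d) (hL : spd L)
    (S : 'M[R]_d) (hS : is_sqrtm L S)
    (l : R) (hl : is_lambda_max (S *m mdiag (invmx L) *m S) l) :
  l * (\det L) `^ (d%:R^-1) >= (\det (mdiag L)) `^ (d%:R^-1).
Proof.
have L_pd : posdef L := hL.
have [[ST _] SS] := hS.
have diag_le := diag_mul_invmx_diag_le L_pd ST SS hl.2.
have [detL_gt0 _] := det_posdef_gt0_le_prod_diag L_pd.
have l_ge0 : 0 <= l.
  exact: le_trans (ltW (posdef_diag_mul_invmx_gt0 _ L_pd)) (diag_le (Ordinal hd)).
have l_root : (l ^+ d) `^ d%:R^-1 = l.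
  by rewrite -powR_mulrn // -powRrM mulfV ?powRr1 // pnatr_eq0 -lt0n.
rewrite -[l in l * _]l_root -powRM ?exprn_ge0 ?(ltW detL_gt0) //.
apply: ge0_ler_powR; rewrite ?invr_ge0 ?ler0n ?nnegrE ?det_mdiag_le_exprn_det //.
- by rewrite det_mdiag prodr_ge0 // => i _; rewrite ltW // posdef_diag_gt0.
- by rewrite mulr_ge0 ?exprn_ge0 ?(ltW detL_gt0).
Qed.
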